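(* Let $G$ be a non-bipartite graph whose edge set decomposes into two bipartite spanning subgraphs $H_1$ and $H_2$ (i.e. $V(H_1)=V(H_2)=V(G)$, $E(H_1)\cap E(H_2)=\emptyset$, $E(H_1)\cup E(H_2)=E(G)$) such that $\Delta(G)=2\Delta(H_1)=2\Delta(H_2)$. If $H_1$ and $H_2$ have good signings, then the lexicographic product $G \circ \overline{K_2}$ has a good signing.
   Context: For a graph $H$ and an edge-signing $\sigma: E(H)\to\{-1,1\}$, the signed adjacency matrix $A^{\sigma}$ has $(i,j)$ entry $\sigma(ij)$ if $ij\in E(H)$ and $0$ otherwise; $\rho(H^\sigma)$ is the maximum absolute value of an eigenvalue of $A^\sigma$. A signing $\sigma$ of $H$ (with $\Delta(H)>1$) is a good signing if $\rho(H^\sigma)\le 2\sqrt{\Delta(H)-1}$, where $\Delta(H)$ is the maximum degree. $\overline{K_2}$ is the edgeless graph on two vertices. The lexicographic product $G\circ H$ has vertex set $V(G)\times V(H)$, with $(x,y)$ adjacent to $(z,t)$ iff $xz\in E(G)$, or $x=z$ and $yt\in E(H)$. *)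

From HB Require Import structures.
From mathcomp Require Import all_boot all_order all_algebra all_field.
Set Implicit Arguments. Unset Strict Implicit. Unset Printing Implicit Defensive.
Import Order.TTheory GRing.Theory Num.Theory.
Local Open Scope ring_scope.

Record sgraph (V : finType) := SGraph {
  adj : rel V;
  adj_sym : symmetric adj;
  adj_irr : irreflexive adj }.

Definition degree (V : finType) (G : sgraph V) (x : V) : nat :=
  #|[set y | adj G x y]|.

Definition max_degree (V : finType) (G : sgraph V) : nat :=
  (\max_(x : V) degree G x)%N.

Definition bipartite (V : finType) (G : sgraph V) : Prop :=
  exists f : V -> bool, forall x y, adj G x y -> f x != f y.

(* A signing assigns a sign to every (unordered) edge; we represent it by a
   function s : V -> V -> bool (true = -1, false = +1) which is symmetric on
   edges, so that it is a well-defined function on unordered edges. *)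
Definition is_signing (V : finType) (G : sgraph V) (s : V -> V -> bool) : Prop :=
  forall x y, adj G x y -> s x y = s y x.

Definition sgn (b : bool) : algC := if b then -1 else 1.

Definition signed_adj (V : finType) (G : sgraph V) (s : V -> V -> bool)
  : 'M[algC]_#|V| :=
  \matrix_(i, j) (if adj G (enum_val i) (enum_val j)
                  then sgn (s (enum_val i) (enum_val j)) else 0).

Definition good_signing (V : finType) (G : sgraph V) (s : V -> V -> bool) : Prop :=
  [/\ (1 < max_degree G)%N, is_signing G s &
      forall a : algC, eigenvalue (signed_adj G s) a ->
        `|a| <= 2 * sqrtC ((max_degree G).-1)%:R].

Definition has_good_signing (V : finType) (G : sgraph V) : Prop :=
  exists s, good_signing G s.

Section Lex.
Variables (V W : finType) (G : sgraph V) (H : sgraph W).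
Definition lex_adj : rel (V * W)%type :=
  fun p q => adj G p.1 q.1 || ((p.1 == q.1) && adj H p.2 q.2).
Lemma lex_adj_sym : symmetric lex_adj.
Proof.
move=> [x y] [z t]; rewrite /lex_adj /= (adj_sym G) (adj_sym H) eq_sym //.
Qed.
Lemma lex_adj_irr : irreflexive lex_adj.
Proof. by move=> [x y]; rewrite /lex_adj /= !adj_irr eqxx. Qed.
Definition lexprod : sgraph (V * W)%type := SGraph lex_adj_sym lex_adj_irr.
End Lex.

Definition K2bar : sgraph bool :=
  @SGraph bool (fun _ _ => false) (fun _ _ => erefl) (fun _ => erefl).

From HB Require Import structures.
From mathcomp Require Import all_boot all_order all_algebra all_field.
From mathcomp Require Import ring zify.
Import Order.TTheory GRing.Theory Num.Theory.

(* Signing H1-edges by the signing of H1 and H2-edges by that of H2, flipped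
   between the two copies of K2bar, makes the signed adjacency matrix of
   G o K2bar equal to A1 (x) [1 1; 1 1] + A2 (x) [1 -1; -1 1].  For a (left)
   eigenvector g with eigenvalue a, the fibre sum u = g(-,1) + g(-,2) and the
   fibre difference w = g(-,1) - g(-,2) satisfy u A1 = (a/2) u and
   w A2 = (a/2) w, and one of them is nonzero.  Hence
   |a| <= 2 * 2 sqrt(D(H1) - 1) <= 2 sqrt(4 D(H1) - 1) = 2 sqrt(D(G o K2bar) - 1). *)

Set Implicit Arguments. Unset Strict Implicit. Unset Printing Implicit Defensive.
Local Open Scope ring_scope.

Lemma eigenvalue_enum_mxP (R : fieldType) (T : finType) (M : T -> T -> R) a :
  eigenvalue (\matrix_(i, j) M (enum_val i) (enum_val j) : 'M_#|T|) a <->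
  exists2 f : T -> R, (exists x, f x != 0) &
    forall y, \sum_x f x * M x y = a * f y.
Proof.
have sum_enum (F : T -> R) : \sum_(i < #|T|) F (enum_val i) = \sum_x F x.
  by rewrite -(big_enum_val F).
split.
- case/eigenvalueP=> v vM v_neq0; exists (fun x => v 0 (enum_rank x)).
    apply/existsP; apply: contraNT v_neq0; rewrite negb_exists => /forallP v0.
    by apply/eqP/rowP => i; rewrite mxE -(enum_valK i); apply/eqP/negbNE/v0.
  move=> y; move/rowP/(_ (enum_rank y)): vM; rewrite !mxE => <-.
  by rewrite -sum_enum; apply: eq_bigr => i _; rewrite !mxE enum_valK enum_rankK.
- case=> f [x fx_neq0] fM; apply/eigenvalueP; exists (\row_i f (enum_val i)).
    by apply/rowP => j; rewrite !mxE -fM -sum_enum; apply: eq_bigr => i _; rewrite !mxE.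
  by apply: contra fx_neq0 => /eqP/rowP/(_ (enum_rank x)); rewrite !mxE enum_rankK => ->.
Qed.

Lemma big_pair_bool (R : nmodType) (T : finType) (F : T * bool -> R) :
  \sum_p F p = \sum_x (F (x, true) + F (x, false)).
Proof.
rewrite [RHS](eq_bigr (fun x => \sum_b F (x, b))) => [|x _]; last by rewrite big_bool.
by rewrite pair_bigA; apply: eq_bigr => -[].
Qed.

Lemma degree_lexK2 (V : finType) (G : sgraph V) x b :
  degree (lexprod G K2bar) (x, b) = (2 * degree G x)%N.
Proof.
rewrite /degree mulnC -card_bool -cardsT -cardsX.
by apply: eq_card => -[y c]; rewrite !inE /= /lex_adj /= andbF orbF andbT.
Qed.

Lemma max_degree_lexK2 (V : finType) (G : sgraph V) :
  max_degree (lexprod G K2bar) = (2 * max_degree G)%N.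
Proof.
rewrite /max_degree (big_morph _ (maxnMr 2%N) (muln0 2%N)).
rewrite (eq_bigr (fun p => 2 * degree G p.1)%N) => [|[x b] _]; last exact: degree_lexK2.
rewrite -(pair_bigA _ (fun x _ => 2 * degree G x)%N).
by apply: eq_bigr => x _; rewrite big_bool /= maxnn.
Qed.

Definition ramanujan_bound (d : nat) : algC := 2 * sqrtC (d.-1)%:R.

Lemma ramanujan_bound_mul4 d : 2 * ramanujan_bound d <= ramanujan_bound (4 * d).
Proof.
rewrite /ramanujan_bound mulrCA ler_pM2l // -{1}(@sqrCK _ 2) // -natrX.
by rewrite -sqrtCM ?nnegrE ?ler0n // -natrM ler_sqrtC ?nnegrE ?ler0n // ler_nat; lia.
Qed.

Definition sadj (V : finType) (G : sgraph V) (s : V -> V -> bool) (x y : V) : algC :=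
  if adj G x y then sgn (s x y) else 0.

Lemma sgn_addb b c : sgn (b (+) c) = sgn b * sgn c.
Proof. by case: b; case: c; rewrite /sgn /= ?mulN1r ?mul1r ?opprK. Qed.

Section LexSigning.

Variables (V : finType) (G H1 H2 : sgraph V) (s1 s2 : V -> V -> bool).
Hypothesis adjG : forall x y, adj G x y = adj H1 x y || adj H2 x y.
Hypothesis H1H2_disjoint : forall x y, ~~ (adj H1 x y && adj H2 x y).

Definition lex_signing (p q : V * bool) : bool :=
  if adj H1 p.1 q.1 then s1 p.1 q.1 else s2 p.1 q.1 (+) (p.2 != q.2).

Lemma is_signing_lex :
  is_signing H1 s1 -> is_signing H2 s2 -> is_signing (lexprod G K2bar) lex_signing.
Proof.
move=> sig1 sig2 [x b] [y c]; rewrite /= /lex_adj /= andbF orbF adjG /lex_signing /=.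
rewrite (adj_sym H1 y) eq_sym; case/orP=> [H1xy|H2xy]; first by rewrite H1xy sig1.
by case: ifP => [/sig1 // | _]; rewrite sig2.
Qed.

Lemma sadj_lex_signing x b y c :
  sadj (lexprod G K2bar) lex_signing (x, b) (y, c) =
  sadj H1 s1 x y + sgn (b != c) * sadj H2 s2 x y.
Proof.
rewrite /sadj /lex_signing /= /lex_adj /= andbF orbF adjG.
have := H1H2_disjoint x y.
by case: (adj H1 x y); case: (adj H2 x y) => //= _; rewrite ?sgn_addb; ring.
Qed.

Lemma lex_signing_eigenvalue a :
  eigenvalue (signed_adj (lexprod G K2bar) lex_signing) a ->
  eigenvalue (signed_adj H1 s1) (a / 2) \/ eigenvalue (signed_adj H2 s2) (a / 2).
Proof.
move/(eigenvalue_enum_mxP (sadj _ _)) => [g [[x0 b0] g_neq0] gA].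
pose u x := g (x, true) + g (x, false).
pose w x := g (x, true) - g (x, false).
pose U y := \sum_x u x * sadj H1 s1 x y.
pose W y := \sum_x w x * sadj H2 s2 x y.
have gA_fibre y c :
    \sum_p g p * sadj (lexprod G K2bar) lex_signing p (y, c) = U y + sgn (~~ c) * W y.
  rewrite big_pair_bool mulr_sumr -big_split; apply: eq_bigr => x _ /=.
  by rewrite !sadj_lex_signing /u /w; case: c; rewrite /sgn /=; ring.
have UW y : U y = a / 2 * u y /\ W y = a / 2 * w y.
  have := gA (y, true); have := gA (y, false).
  rewrite !gA_fibre /sgn /= /u /w => eF eT.
  split.
  - rewrite -[U y](_ : (U y + 1 * W y + (U y + -1 * W y)) / 2 = U y); last by field.
    by rewrite eT eF; field.
  - rewrite -[W y](_ : (U y + 1 * W y - (U y + -1 * W y)) / 2 = W y); last by field.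
    by rewrite eT eF; field.
have [u_neq0|w_neq0] : u x0 != 0 \/ w x0 != 0.
  apply/orP; rewrite -negb_and; apply: contra g_neq0 => /andP[/eqP u0 /eqP w0].
  have -> : g (x0, b0) = (if b0 then u x0 + w x0 else u x0 - w x0) / 2.
    by case: b0; rewrite /u /w; field.
  by rewrite u0 w0 addr0 subr0 if_same mul0r.
- left; apply/(eigenvalue_enum_mxP (sadj _ _)).
  by exists u => [|y]; [exists x0 | case: (UW y)].
- right; apply/(eigenvalue_enum_mxP (sadj _ _)).
  by exists w => [|y]; [exists x0 | case: (UW y)].
Qed.

End LexSigning.

Theorem mainTheorem2 (V : finType) (G H1 H2 : sgraph V) :
  ~ bipartite G ->
  bipartite H1 -> bipartite H2 ->
  (forall x y, adj G x y = adj H1 x y || adj H2 x y) ->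
  (forall x y, ~~ (adj H1 x y && adj H2 x y)) ->
  max_degree G = (2 * max_degree H1)%N ->
  max_degree G = (2 * max_degree H2)%N ->
  has_good_signing H1 -> has_good_signing H2 ->
  has_good_signing (lexprod G K2bar).
Proof.
move=> _ _ _ adjG disj dG1 dG2 [s1 [d1_gt1 sig1 bound1]] [s2 [_ sig2 bound2]].
have dH2 : max_degree H2 = max_degree H1 by lia.
have dlex : max_degree (lexprod G K2bar) = (4 * max_degree H1)%N.
  by rewrite max_degree_lexK2 dG1 mulnA.
exists (lex_signing H1 s1 s2); split.
- by rewrite dlex; lia.
- exact: is_signing_lex.
- move=> a /(lex_signing_eigenvalue adjG disj) eig_half.
  have half_bound : `|a / 2| <= ramanujan_bound (max_degree H1).
    by case: eig_half => [/bound1|/bound2]; rewrite ?dH2.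
  rewrite dlex; apply: le_trans (ramanujan_bound_mul4 _).
  have -> : a = 2 * (a / 2) by rewrite mulrC divfK ?pnatr_eq0.
  by rewrite normrM ger0_norm // ler_pM2l.
Qed.
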